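(* Assume the standing setup below. Let $x\in X$ and let $1\le i\le j\le k$ be such that $(s_i,[x]_{s_i,X})\to(s_j,[x]_{s_j,X})$ is a layer of $X$. Suppose that either $y\in[x]_{s_i,Y}$ or $y\notin[x]_{s_j,Y}$. Then $[x]_{s_i,Y}=[x]_{s_j,Y}$ (so this edge is a partial layer for $Y$), and for any phase change numbers $s\le s_i$ and $t\ge s_j$ of $Y$ with $[x]_{s,Y}=[x]_{t,Y}$ (in particular for the layer $(s,[x]_{s,Y})\to(t,[x]_{t,Y})$ of $Y$ containing this edge) one has $s_{i-1}<s\le s_i$ and $s_j\le t<s_{j+1}$.
   Context: For a finite set $Z\subset\mathbb{R}^n$ and a real number $s\ge 0$, the Vietoris–Rips complex $V_s(Z)$ is the simplicial complex with vertex set $Z$ whose simplices are the nonempty subsets $\sigma\subseteq Z$ with $d(z,z')\le s$ for all $z,z'\in\sigma$ ($d$ the Euclidean distance). For $z\in Z$, $[z]_{s,Z}\subseteq Z$ denotes the set of vertices of the path component of $V_s(Z)$ containing $z$; for $s\le t$, $[z]_{s,Z}\subseteq[z]_{t,Z}$. The phase change numbers of $Z$ are the distinct values of $d(z,z')$, $z,z'\in Z$. A partial layer for $Z$ is an edge $(s,[z]_{s,Z})\to(t,[z]_{t,Z})$ with $s\le t$ and $[z]_{s,Z}=[z]_{t,Z}$ as subsets of $Z$. A layer of $Z$ is a partial layer $(s,[z]_{s,Z})\to(t,[z]_{t,Z})$ such that $s,t$ are phase change numbers of $Z$ and which is maximal: there are no phase change numbers $s'\le s$, $t'\ge t$ of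 $Z$ with $(s',t')\ne(s,t)$ and $[z]_{s',Z}=[z]_{t',Z}$. Standing setup: $X\subset\mathbb{R}^n$ is a finite set with at least two points, $y\in\mathbb{R}^n\setminus X$, $Y=X\sqcup\{y\}$. The phase change numbers of $X$ are $0=s_0<s_1<\dots<s_k$; set $s_{k+1}=+\infty$. There are $x_0\in X$ and a real $r>0$ with $d(y,x_0)<r$ and $r<s_{i+1}-s_i$ for all $0\le i<k$. *)

(* points of R^n are lists of reals of length n. *)
From Stdlib Require Import Reals List Lra.
Import ListNotations.
Open Scope R_scope.

Definition sqdist (a b : list R) : R :=
  fold_right Rplus 0 (map (fun p => (fst p - snd p) ^ 2) (combine a b)).
Definition edist (a b : list R) : R := sqrt (sqdist a b).

Definition in_Rn (n : nat) (Z : list (list R)) : Prop :=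
  Forall (fun p => length p = n) Z.

(* z and w lie in the same path component of the Vietoris-Rips complex V_s(Z):
   they are joined by a chain of vertices of Z with consecutive distances <= s
   (path components of V_s(Z) are those of its 1-skeleton). *)
Inductive conn (s : R) (Z : list (list R)) (z : list R) : list R -> Prop :=
| conn_refl : In z Z -> conn s Z z z
| conn_step : forall w w', conn s Z z w -> In w' Z -> edist w w' <= s ->
    conn s Z z w'.

Definition comp_eq (Z : list (list R)) (z : list R) (s t : R) : Prop :=
  forall w, In w Z -> (conn s Z z w <-> conn t Z z w).

Definition is_pcn (Z : list (list R)) (s : R) : Prop :=
  exists z z', In z Z /\ In z' Z /\ edist z z' = s.

Definition partial_layer (Z : list (list R)) (z : list R) (s t : R) : Prop :=
  s <= t /\ comp_eq Z z s t.

Definition is_layer (Z : list (list R)) (z : list R) (s t : R) : Prop :=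
  partial_layer Z z s t /\ is_pcn Z s /\ is_pcn Z t /\
  ~ (exists s' t', is_pcn Z s' /\ is_pcn Z t' /\ s' <= s /\ t <= t' /\
                   (s', t') <> (s, t) /\ comp_eq Z z s' t').

(* Since d(y,x0) < r and r is
   smaller than every gap s_{m+1} - s_m between phase change numbers of X, a
   point u of X with d(u,y) <= s_m already satisfies d(u,x0) <= s_m
   ([near_y_near_x0]).  Hence any Rips chain at scale s_m in Y = X + {y} may
   replace a visit to y by a visit to x0, so at scales s_m the components of
   Y restricted to X are those of X ([conn_drop_y]).  Combined with the
   maximality of layers ([layer_maximal_witness]: enlarging a layer of X
   separates some vertex) this transfers the layer to Y and forbids the
   bounds of any equal-component interval of Y from reaching s_{i-1} or
   s_{j+1} ([comp_eq_collapse]). *)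
From Stdlib Require Import Reals List Lra Lia Arith Classical.
Import ListNotations.
Open Scope R_scope.

Lemma sqdist_cons a0 a b0 b : sqdist (a0 :: a) (b0 :: b) = (a0 - b0) ^ 2 + sqdist a b.
Proof. reflexivity. Qed.

Lemma sqdist_nonneg a b : 0 <= sqdist a b.
Proof.
  unfold sqdist; induction (combine a b) as [|[u v] l IH]; simpl; [lra|].
  pose proof (pow2_ge_0 (u - v)); simpl in *; nra.
Qed.

Lemma edist_sym a b : edist a b = edist b a.
Proof.
  unfold edist; f_equal; revert b.
  induction a as [|a0 a IH]; intros [|b0 b]; try reflexivity.
  rewrite !sqdist_cons, IH; f_equal; ring.
Qed.

(* One inductive step of Minkowski's inequality: if the tails satisfy
   sqrt c <= p + q, then adding the coordinate differences D and E keeps the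
   triangle inequality. *)
Lemma minkowski_step D E p q c :
  0 <= p -> 0 <= q -> 0 <= c -> c <= (p + q) ^ 2 ->
  sqrt ((D + E) ^ 2 + c) <= sqrt (D ^ 2 + p ^ 2) + sqrt (E ^ 2 + q ^ 2).
Proof.
  intros Hp Hq Hc Hcpq.
  set (U := sqrt (D ^ 2 + p ^ 2)); set (V := sqrt (E ^ 2 + q ^ 2)).
  assert (HU : U * U = D ^ 2 + p ^ 2) by (apply sqrt_sqrt; nra).
  assert (HV : V * V = E ^ 2 + q ^ 2) by (apply sqrt_sqrt; nra).
  assert (U0 : 0 <= U) by apply sqrt_pos.
  assert (V0 : 0 <= V) by apply sqrt_pos.
  assert (cauchy_schwarz : D * E + p * q <= U * V).
  { pose proof (Rmult_le_pos U V U0 V0) as HUV0.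
    apply Rnot_lt_le; intro Hlt.
    assert (HUV : (U * V) * (U * V) = (D ^ 2 + p ^ 2) * (E ^ 2 + q ^ 2))
      by (rewrite <- HU, <- HV; ring).
    assert (Hsq : (U * V) * (U * V) < (D * E + p * q) * (D * E + p * q)) by nra.
    (* Lagrange's identity: |(D,p)|^2 |(E,q)|^2 = (DE + pq)^2 + (Dq - Ep)^2 *)
    pose proof (pow2_ge_0 (D * q - E * p)); nra. }
  rewrite <- (sqrt_pow2 (U + V)) by lra.
  apply sqrt_le_1_alt; nra.
Qed.

Lemma edist_triangle a b c : length a = length b -> length b = length c ->
  edist a c <= edist a b + edist b c.
Proof.
  revert b c; induction a as [|a0 a IH]; intros [|b0 b] [|c0 c]; simpl;
    intros Hab Hbc; try discriminate.
  - unfold edist, sqdist; simpl; rewrite sqrt_0; lra.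
  - injection Hab as Hab; injection Hbc as Hbc.
    specialize (IH b c Hab Hbc); unfold edist in *; rewrite !sqdist_cons.
    pose proof (sqdist_nonneg a b); pose proof (sqdist_nonneg b c).
    pose proof (sqdist_nonneg a c).
    rewrite <- (pow2_sqrt (sqdist a b)) at 1 by assumption.
    rewrite <- (pow2_sqrt (sqdist b c)) at 1 by assumption.
    replace (a0 - c0) with ((a0 - b0) + (b0 - c0)) by ring.
    apply minkowski_step; try apply sqrt_pos; try assumption.
    rewrite <- (pow2_sqrt (sqdist a c)) by assumption.
    pose proof (sqrt_pos (sqdist a c)); apply pow_incr; lra.
Qed.

Lemma conn_mono s t Z z w : conn s Z z w -> s <= t -> conn t Z z w.
Proof.
  intros Hc Hst; induction Hc; [now constructor|].
  eapply conn_step; eauto; lra.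
Qed.

Lemma conn_incl s Z Z' z w : incl Z Z' -> conn s Z z w -> conn s Z' z w.
Proof. intros Hi Hc; induction Hc; [constructor; auto | eapply conn_step; eauto]. Qed.

Lemma conn_target_in s Z z w : conn s Z z w -> In w Z.
Proof. intros Hc; induction Hc; assumption. Qed.

Lemma layer_maximal_witness Z z a b a' b' :
  is_layer Z z a b -> is_pcn Z a' -> is_pcn Z b' -> a' <= a -> b <= b' ->
  (a', b') <> (a, b) ->
  exists w, In w Z /\ conn b' Z z w /\ ~ conn a' Z z w.
Proof.
  intros [[Hab _] [_ [_ Hmax]]] Ha' Hb' Ha'a Hbb' Hne.
  apply NNPP; intro Hno; apply Hmax.
  exists a', b'; do 5 (split; [assumption|]).
  intros v Hv; split; intro Hc.
  - apply (conn_mono _ _ _ _ _ Hc); lra.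
  - apply NNPP; intro Hn; apply Hno; eauto.
Qed.

Lemma increasing_mono (k : nat) (s : nat -> R) :
  (forall i, (i < k)%nat -> s i < s (S i)) ->
  forall a b, (a <= b)%nat -> (b <= k)%nat -> s a <= s b.
Proof.
  intros Hs a b Hab; induction Hab as [|b Hab IH]; intros Hb; [lra|].
  pose proof (Hs b ltac:(lia)); specialize (IH ltac:(lia)); lra.
Qed.

Section Standing.
Variables (n : nat) (X : list (list R)) (y : list R).
Variables (k : nat) (s : nat -> R) (x0 : list R) (r : R).
Hypothesis HXn : in_Rn n X.
Hypothesis Hyn : length y = n.
Hypothesis HyX : ~ In y X.
Hypothesis Hsinc : forall i, (i < k)%nat -> s i < s (S i).
Hypothesis Hpcn : forall u, is_pcn X u <-> exists i, (i <= k)%nat /\ u = s i.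
Hypothesis Hx0 : In x0 X.
Hypothesis Hyx0 : edist y x0 < r.
Hypothesis Hrgap : forall i, (i < k)%nat -> r < s (S i) - s i.

(* The key estimate: d(u,x0) < s_m + r is itself some s_p, and the gap
   condition forces p <= m. *)
Lemma near_y_near_x0 m u :
  (m <= k)%nat -> In u X -> edist u y <= s m -> edist u x0 <= s m.
Proof.
  intros Hm Hu Hd.
  assert (Hlen : forall v, In v X -> length v = n) by (apply Forall_forall, HXn).
  assert (Htri : edist u x0 <= edist u y + edist y x0)
    by (apply edist_triangle; rewrite ?(Hlen u Hu), ?(Hlen x0 Hx0), Hyn; reflexivity).
  destruct (proj1 (Hpcn (edist u x0))) as [p [Hp Hep]]; [exists u, x0; auto|].
  rewrite Hep in Htri |- *.
  destruct (le_lt_dec p m) as [Hpm|Hmp].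
  - exact (increasing_mono k s Hsinc p m Hpm Hm).
  - pose proof (increasing_mono k s Hsinc (S m) p Hmp Hp).
    pose proof (Hrgap m ltac:(lia)); lra.
Qed.

(* Invariant along a Rips chain of Y at scale s_m starting in X: each vertex
   of X on it is reachable inside X, and if the chain visits y then x0 is. *)
Lemma conn_detour m x v :
  (m <= k)%nat -> In x X -> conn (s m) (y :: X) x v ->
  (In v X -> conn (s m) X x v) /\ (v = y -> conn (s m) X x x0).
Proof.
  intros Hm Hx Hc.
  induction Hc as [_ | w w' Hc [IHX IHy] Hw' Hd].
  { split; [intros _; now constructor | intros ->; contradiction]. }
  pose proof (conn_target_in _ _ _ _ Hc) as Hw.
  destruct Hw' as [<- | Hw'].
  - (* the chain steps onto y: reroute it to x0 *)
    split; [intro; contradiction | intros _].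
    destruct Hw as [<- | Hw]; [exact (IHy eq_refl)|].
    apply (conn_step _ _ _ w x0 (IHX Hw) Hx0).
    exact (near_y_near_x0 m w Hm Hw Hd).
  - (* the chain steps onto w' in X: from y, leave from x0 instead *)
    split; [intros _ | intros ->; contradiction].
    destruct Hw as [<- | Hw].
    + apply (conn_step _ _ _ x0 w' (IHy eq_refl) Hw').
      rewrite edist_sym; apply (near_y_near_x0 m w' Hm Hw').
      rewrite edist_sym; exact Hd.
    + exact (conn_step _ _ _ w w' (IHX Hw) Hw' Hd).
Qed.

Lemma conn_drop_y m x w :
  (m <= k)%nat -> In x X -> In w X -> conn (s m) (y :: X) x w -> conn (s m) X x w.
Proof. intros Hm Hx Hw Hc; exact (proj1 (conn_detour m x w Hm Hx Hc) Hw). Qed.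

Lemma comp_eq_collapse m x w b s' t' :
  (m <= k)%nat -> In x X -> In w X -> comp_eq (y :: X) x s' t' ->
  s' <= s m -> b <= t' -> conn b X x w -> conn (s m) X x w.
Proof.
  intros Hm Hx Hw Hce Hs' Hbt Hc.
  apply conn_drop_y; try assumption.
  apply (conn_mono s'); [|assumption].
  apply Hce; [now right|].
  apply (conn_mono b); [|assumption].
  apply (conn_incl _ X); [intros v Hv; now right | assumption].
Qed.

End Standing.

Theorem proposition15
  (n : nat) (X : list (list R)) (y : list R)
  (k : nat) (s : nat -> R) (x0 : list R) (r : R)
  (* standing setup *)
  (HXn : in_Rn n X) (Hyn : length y = n)
  (HX2 : exists a b, In a X /\ In b X /\ a <> b)
  (HyX : ~ In y X)
  (Hs0 : s 0%nat = 0)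
  (Hsinc : forall i, (i < k)%nat -> s i < s (S i))
  (Hpcn : forall u, is_pcn X u <-> exists i, (i <= k)%nat /\ u = s i)
  (Hx0 : In x0 X) (Hr : 0 < r) (Hyx0 : edist y x0 < r)
  (Hrgap : forall i, (i < k)%nat -> r < s (S i) - s i)
  (* hypotheses of the proposition *)
  (x : list R) (Hx : In x X) (i j : nat)
  (Hij : (1 <= i)%nat /\ (i <= j)%nat /\ (j <= k)%nat)
  (Hlayer : is_layer X x (s i) (s j))
  (Hy : conn (s i) (y :: X) x y \/ ~ conn (s j) (y :: X) x y) :
  comp_eq (y :: X) x (s i) (s j) /\
  forall s' t', is_pcn (y :: X) s' -> is_pcn (y :: X) t' ->
    s' <= s i -> s j <= t' -> comp_eq (y :: X) x s' t' ->
    (s (i - 1)%nat < s' /\ s' <= s i) /\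
    (s j <= t' /\ ((j < k)%nat -> t' < s (S j))).
Proof.
  destruct Hij as [Hi1 [Hij Hjk]].
  pose proof Hlayer as [[Hsij HceX] _].
  assert (Hpcn_s : forall m, (m <= k)%nat -> is_pcn X (s m))
    by (intros m Hm; apply Hpcn; eauto).
  pose proof (conn_drop_y n X y k s x0 r HXn Hyn HyX Hsinc Hpcn Hx0 Hyx0 Hrgap)
    as drop_y.
  pose proof (comp_eq_collapse n X y k s x0 r HXn Hyn HyX Hsinc Hpcn Hx0 Hyx0 Hrgap)
    as collapse.
  pose proof (Hsinc (i - 1)%nat ltac:(lia)) as Hgap_i.
  replace (S (i - 1)) with i in Hgap_i by lia.
  assert (Hpartial : comp_eq (y :: X) x (s i) (s j)).
  { intros w Hw; split; intro Hc; [now apply (conn_mono (s i))|].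
    destruct Hw as [<- | Hw]; [tauto|].
    apply (conn_incl _ X); [intros v Hv; now right|].
    apply HceX, drop_y; assumption. }
  split; [exact Hpartial|].
  intros s' t' _ _ Hs' Ht' Hce.
  split; split; try assumption.
  - (* lowering the layer to s_{i-1} separates a vertex that Y cannot *)
    apply Rnot_le_lt; intro Hle.
    destruct (layer_maximal_witness X x (s i) (s j) (s (i - 1)%nat) (s j) Hlayer
                (Hpcn_s (i - 1)%nat ltac:(lia)) (Hpcn_s j Hjk) ltac:(lra) ltac:(lra))
      as [w [Hw [Hc Hn]]].
    { intro E; injection E; intros; lra. }
    apply Hn, (collapse (i - 1)%nat x w (s j) s' t'); auto; lia.
  - (* raising the layer to s_{j+1} separates a vertex that Y cannot *)
    intros Hjk'; apply Rnot_le_lt; intro Hle.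
    pose proof (Hsinc j Hjk').
    destruct (layer_maximal_witness X x (s i) (s j) (s i) (s (S j)) Hlayer
                (Hpcn_s i ltac:(lia)) (Hpcn_s (S j) Hjk') ltac:(lra) ltac:(lra))
      as [w [Hw [Hc Hn]]].
    { intro E; injection E; intros; lra. }
    apply Hn, (collapse i x w (s (S j)) s' t'); auto; lia.
Qed.
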